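(* Let $M$ be an object of an abelian category $\mathcal{A}$. Then: (1) $M$ is strongly self-Rickart if and only if $M$ is self-Rickart and weak duo. (2) $M$ is dual strongly self-Rickart if and only if $M$ is dual self-Rickart and weak duo.
   Context: A morphism $f:X\to Y$ is a section if $f'f=1_X$ for some $f'$, a retraction if $ff'=1_Y$ for some $f'$. A monomorphism $k:K\to M$ is fully invariant if for every $h:M\to M$ there is $\alpha:K\to K$ with $hk=k\alpha$; an epimorphism $c:M\to C$ is fully coinvariant if for every $h:M\to M$ there is $\gamma:C\to C$ with $ch=\gamma c$. $M$ is self-Rickart if the kernel of every endomorphism $f:M\to M$ is a section; dual self-Rickart if the cokernel of every endomorphism of $M$ is a retraction; strongly self-Rickart if the kernel of every endomorphism of $M$ is a fully invariant section; dual strongly self-Rickart if the cokernel of every endomorphism of $M$ is a fully coinvariant retraction (equivalently its image is a fully invariant section). $M$ is weak duo if every section $K\to M$ is fully invariant (equivalently every retraction $M\to C$ is fully coinvariant). *)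

From HB Require Import structures.
From mathcomp Require Import all_boot all_algebra.
Set Implicit Arguments. Unset Strict Implicit. Unset Printing Implicit Defensive.
Import GRing.Theory.
Local Open Scope ring_scope.

(* A preadditive category: hom-sets are abelian groups, composition is
   bilinear.  [comp g f] is  g ∘ f  (first f, then g). *)
Record preadditive := Preadditive {
  Obj : Type;
  Hom : Obj -> Obj -> zmodType;
  idm : forall X, Hom X X;
  comp : forall X Y Z, Hom Y Z -> Hom X Y -> Hom X Z;
  comp_assoc : forall W X Y Z (h : Hom Y Z) (g : Hom X Y) (f : Hom W X),
      comp h (comp g f) = comp (comp h g) f;
  comp_idl : forall X Y (f : Hom X Y), comp (idm Y) f = f;
  comp_idr : forall X Y (f : Hom X Y), comp f (idm X) = f;
  comp_addl : forall X Y Z (g1 g2 : Hom Y Z) (f : Hom X Y),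
      comp (g1 + g2) f = comp g1 f + comp g2 f;
  comp_addr : forall X Y Z (g : Hom Y Z) (f1 f2 : Hom X Y),
      comp g (f1 + f2) = comp g f1 + comp g f2
}.

Arguments idm {C} X : rename.
Arguments comp {C X Y Z} g f : rename.

Section Notions.
Variable C : preadditive.

Definition is_zero_object (Z : Obj C) : Prop :=
  (forall X (f : Hom Z X), f = 0) /\ (forall X (f : Hom X Z), f = 0).

Definition is_biproduct (A B P : Obj C)
  (i1 : Hom A P) (i2 : Hom B P) (p1 : Hom P A) (p2 : Hom P B) : Prop :=
  [/\ comp p1 i1 = idm A, comp p2 i2 = idm B,
      comp p1 i2 = 0, comp p2 i1 = 0 &
      comp i1 p1 + comp i2 p2 = idm P].

Definition mono (X Y : Obj C) (f : Hom X Y) : Prop :=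
  forall W (g h : Hom W X), comp f g = comp f h -> g = h.

Definition epi (X Y : Obj C) (f : Hom X Y) : Prop :=
  forall W (g h : Hom Y W), comp g f = comp h f -> g = h.

Definition is_kernel (X Y K : Obj C) (f : Hom X Y) (k : Hom K X) : Prop :=
  comp f k = 0 /\
  forall W (g : Hom W X), comp f g = 0 ->
    exists u : Hom W K, comp k u = g /\
      forall v : Hom W K, comp k v = g -> v = u.

Definition is_cokernel (X Y Q : Obj C) (f : Hom X Y) (c : Hom Y Q) : Prop :=
  comp c f = 0 /\
  forall W (g : Hom Y W), comp g f = 0 ->
    exists u : Hom Q W, comp u c = g /\
      forall v : Hom Q W, comp v c = g -> v = u.

Definition abelian : Prop :=
  (exists Z, is_zero_object Z) /\
      (forall A B : Obj C, exists P (i1 : Hom A P) (i2 : Hom B P)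
        (p1 : Hom P A) (p2 : Hom P B), is_biproduct i1 i2 p1 p2) /\
      (forall X Y (f : Hom X Y), exists K (k : Hom K X), is_kernel f k) /\
      (forall X Y (f : Hom X Y), exists Q (c : Hom Y Q), is_cokernel f c) /\
      (forall X Y (m : Hom X Y), mono m -> exists Q (g : Hom Y Q), is_kernel g m) /\
      (forall X Y (e : Hom X Y), epi e -> exists K (g : Hom K X), is_cokernel g e).

Definition section (X Y : Obj C) (f : Hom X Y) : Prop :=
  exists f' : Hom Y X, comp f' f = idm X.

Definition retraction (X Y : Obj C) (f : Hom X Y) : Prop :=
  exists f' : Hom Y X, comp f f' = idm Y.

Definition fully_invariant (K M : Obj C) (k : Hom K M) : Prop :=
  mono k /\
  forall h : Hom M M, exists alpha : Hom K K, comp h k = comp k alpha.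

Definition fully_coinvariant (M Q : Obj C) (c : Hom M Q) : Prop :=
  epi c /\
  forall h : Hom M M, exists gamma : Hom Q Q, comp c h = comp gamma c.

Definition self_Rickart (M : Obj C) : Prop :=
  forall (f : Hom M M) K (k : Hom K M), is_kernel f k -> section k.

Definition dual_self_Rickart (M : Obj C) : Prop :=
  forall (f : Hom M M) Q (c : Hom M Q), is_cokernel f c -> retraction c.

Definition strongly_self_Rickart (M : Obj C) : Prop :=
  forall (f : Hom M M) K (k : Hom K M), is_kernel f k ->
    fully_invariant k /\ section k.

Definition dual_strongly_self_Rickart (M : Obj C) : Prop :=
  forall (f : Hom M M) Q (c : Hom M Q), is_cokernel f c ->
    fully_coinvariant c /\ retraction c.

Definition weak_duo (M : Obj C) : Prop :=
  forall K (k : Hom K M), section k -> fully_invariant k.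

End Notions.

(* A section k with left inverse k' is the kernel of the endomorphism
   1 - k k', and is fully invariant as soon as (1 - k k') h k = 0 for every h;
   dually a retraction c with right inverse c' is fully coinvariant when
   c h (1 - c' c) = 0 for every h.  Hence strongly self-Rickart objects are
   weak duo.  If M is dual strongly self-Rickart, the cokernel c of k k' is
   fully coinvariant, kills k and 1 - k k' factors through it, which forces
   (1 - k k') h k = 0.  Conversely, the kernel j of a retraction c is a
   section with j u = 1 - c' c, so full invariance of j (weak duo) gives
   c h (1 - c' c) = c h j u = 0. *)
From mathcomp Require Import all_boot all_algebra.
Set Implicit Arguments. Unset Strict Implicit. Unset Printing Implicit Defensive.
Import GRing.Theory.
Local Open Scope ring_scope.

Section Preadditive.
Variable C : preadditive.
Implicit Types X Y Z K M Q : Obj C.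

Lemma comp0l X Y Z (f : Hom X Y) : comp (0 : Hom Y Z) f = 0.
Proof. by apply: (addrI (comp (0 : Hom Y Z) f)); rewrite -comp_addl !addr0. Qed.

Lemma comp0r X Y Z (g : Hom Y Z) : comp g (0 : Hom X Y) = 0.
Proof. by apply: (addrI (comp g (0 : Hom X Y))); rewrite -comp_addr !addr0. Qed.

Lemma compBl X Y Z (g1 g2 : Hom Y Z) (f : Hom X Y) :
  comp (g1 - g2) f = comp g1 f - comp g2 f.
Proof.
have compNl : comp (- g2) f = - comp g2 f.
  by apply: (addrI (comp g2 f)); rewrite -comp_addl !subrr comp0l.
by rewrite comp_addl compNl.
Qed.

Lemma compBr X Y Z (g : Hom Y Z) (f1 f2 : Hom X Y) :
  comp g (f1 - f2) = comp g f1 - comp g f2.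
Proof.
have compNr : comp g (- f2) = - comp g f2.
  by apply: (addrI (comp g f2)); rewrite -comp_addr !subrr comp0r.
by rewrite comp_addr compNr.
Qed.

Lemma section_mono X Y (k : Hom X Y) : section k -> mono k.
Proof.
move=> [k' k'k] W g h kg_kh.
by rewrite -(comp_idl g) -(comp_idl h) -k'k -!comp_assoc kg_kh.
Qed.

Lemma retraction_epi X Y (c : Hom X Y) : retraction c -> epi c.
Proof.
move=> [c' cc'] W g h gc_hc.
by rewrite -(comp_idr g) -(comp_idr h) -cc' !comp_assoc gc_hc.
Qed.

Lemma kernel_mono X Y K (f : Hom X Y) (k : Hom K X) : is_kernel f k -> mono k.
Proof.
move=> [fk0 kerP] W g h kg_kh.
have [|u [_ uniq_u]] := kerP W (comp k g); first by rewrite comp_assoc fk0 comp0l.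
by rewrite (uniq_u g erefl) (uniq_u h (esym kg_kh)).
Qed.

Section SectionOf.
Variables (K M : Obj C) (k : Hom K M) (k' : Hom M K).
Hypothesis k'k : comp k' k = idm K.

Lemma section_is_kernel : is_kernel (idm M - comp k k') k.
Proof.
split; first by rewrite compBl comp_idl -comp_assoc k'k comp_idr subrr.
move=> W g eg0; exists (comp k' g); split; last first.
  by move=> v <-; rewrite comp_assoc k'k comp_idl.
by move: eg0; rewrite compBl comp_idl comp_assoc => /subr0_eq/esym.
Qed.

Lemma section_fully_invariant :
  (forall h : Hom M M, comp (idm M - comp k k') (comp h k) = 0) ->
  fully_invariant k.
Proof.
move=> vanish; split; first by apply: section_mono; exists k'.
move=> h; exists (comp k' (comp h k)).
move: (vanish h); rewrite compBl comp_idl => /subr0_eq {1}->.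
by rewrite -comp_assoc.
Qed.

Lemma cokernel_section_complement Q (c : Hom M Q) :
  is_cokernel (comp k k') c ->
  comp c k = 0 /\ exists u : Hom Q M, comp u c = idm M - comp k k'.
Proof.
move=> [ce0 cokP]; split.
  by rewrite -(comp_idr k) -k'k !comp_assoc -(comp_assoc c) ce0 comp0l.
have [|u [uc _]] := cokP M (idm M - comp k k'); last by exists u.
by rewrite compBl comp_idl -comp_assoc (comp_assoc k') k'k comp_idl subrr.
Qed.

End SectionOf.

Section RetractionOf.
Variables (M Q : Obj C) (c : Hom M Q) (c' : Hom Q M).
Hypothesis cc' : comp c c' = idm Q.

Lemma retraction_fully_coinvariant :
  (forall h : Hom M M, comp c (comp h (idm M - comp c' c)) = 0) ->
  fully_coinvariant c.
Proof.
move=> vanish; split; first by apply: retraction_epi; exists c'.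
move=> h; exists (comp c (comp h c')).
move: (vanish h); rewrite !compBr comp_idr => /subr0_eq ->.
by rewrite !comp_assoc.
Qed.

Lemma kernel_retraction_complement K (j : Hom K M) :
  is_kernel c j ->
  exists u : Hom M K, comp j u = idm M - comp c' c /\ comp u j = idm K.
Proof.
move=> kerj; have [cj0 kerP] := kerj.
have [|u [ju _]] := kerP M (idm M - comp c' c).
  by rewrite compBr comp_idr comp_assoc cc' comp_idl subrr.
exists u; split => //; apply: (kernel_mono kerj).
by rewrite comp_idr comp_assoc ju compBl comp_idl -comp_assoc cj0 comp0r subr0.
Qed.

End RetractionOf.

Lemma strongly_self_Rickart_weak_duo M :
  strongly_self_Rickart M -> weak_duo M.
Proof. by move=> sRM K k [k' k'k]; case: (sRM _ _ _ (section_is_kernel k'k)). Qed.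

Lemma strongly_self_Rickart_of_weak_duo M :
  self_Rickart M -> weak_duo M -> strongly_self_Rickart M.
Proof. by move=> RM wdM f K k /(RM f) sk; split; [apply: wdM |]. Qed.

Lemma dual_strongly_self_Rickart_weak_duo M :
  (forall f : Hom M M, exists Q (c : Hom M Q), is_cokernel f c) ->
  dual_strongly_self_Rickart M -> weak_duo M.
Proof.
move=> cokernels dsRM K k [k' k'k].
have [Q [c cokc]] := cokernels (comp k k').
have [[_ coinv] _] := dsRM _ _ _ cokc.
have [ck0 [u uc]] := cokernel_section_complement k'k cokc.
apply: (section_fully_invariant k'k) => h.
have [g cg] := coinv h.
by rewrite -uc -comp_assoc (comp_assoc c) cg -comp_assoc ck0 !comp0r.
Qed.

Lemma dual_strongly_self_Rickart_of_weak_duo M :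
  (forall Q (c : Hom M Q), exists K (j : Hom K M), is_kernel c j) ->
  dual_self_Rickart M -> weak_duo M -> dual_strongly_self_Rickart M.
Proof.
move=> kernels dRM wdM f Q c cokc.
have [c' cc'] := dRM _ _ _ cokc.
split; last by exists c'.
have [K [j kerj]] := kernels Q c.
have [u [ju uj]] := kernel_retraction_complement cc' kerj.
have [_ inv] := wdM K j (ex_intro _ u uj).
apply: (retraction_fully_coinvariant cc') => h.
have [b hj] := inv h.
by rewrite -ju !comp_assoc -(comp_assoc c) hj comp_assoc kerj.1 !comp0l.
Qed.

End Preadditive.

Theorem corollary2p10 (C : preadditive) (HC : abelian C) (M : Obj C) :
  (strongly_self_Rickart M <-> self_Rickart M /\ weak_duo M) /\
  (dual_strongly_self_Rickart M <-> dual_self_Rickart M /\ weak_duo M).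
Proof.
have [_ [_ [kernels [cokernels _]]]] := HC.
split; split.
- move=> sRM; split; last exact: strongly_self_Rickart_weak_duo.
  by move=> f K k kerk; case: (sRM f K k kerk).
- by case; apply: strongly_self_Rickart_of_weak_duo.
- move=> dsRM; split; last by apply: dual_strongly_self_Rickart_weak_duo.
  by move=> f Q c cokc; case: (dsRM f Q c cokc).
- by case; apply: dual_strongly_self_Rickart_of_weak_duo.
Qed.
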